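(* Let $S$ be a state of a $1$-dimensional Hegselmann–Krause system with social network $G=(V,E)$ and confidence bound $\varepsilon>0$, and let $c\in\mathbb{R}$. Let $V_\ell=\{v\in V: x_v\le c\}$, $V_r=V\setminus V_\ell$, and $E_{\ell,r}=\{\{u,w\}\in E_I: u\in V_\ell,\ w\in V_r\}$. Then $$\sum_{v\in V}|N_v|\,|m_v|\ \ge\ 2\sum_{\{u,w\}\in E_{\ell,r}}|x_u-x_w|.$$
   Context: A $1$-dimensional Hegselmann–Krause system has a finite undirected graph $G=(V,E)$ (social network), a confidence bound $\varepsilon>0$, and a state given by positions $x_v\in\mathbb{R}$. In a state, $N_v=\{u:\{u,v\}\in E,\ |x_u-x_v|\le\varepsilon\}\cup\{v\}$ is the influencing neighborhood of $v$, $m_v=\frac{1}{|N_v|}\sum_{u\in N_v}(x_u-x_v)$ is its movement, and $E_I=\{\{u,v\}\in E:|x_u-x_v|\le\varepsilon\}$ is the edge set of the influence network. *)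

From HB Require Import structures.
From mathcomp Require Import all_boot all_order all_algebra.
Set Implicit Arguments. Unset Strict Implicit. Unset Printing Implicit Defensive.
Import Order.TTheory GRing.Theory Num.Theory.
Local Open Scope ring_scope.

(* Social network: a finite simple undirected graph on the finType V,
   given by a symmetric irreflexive adjacency relation e.
   A state is a position map x : V -> R. *)

Definition simple_graph (V : finType) (e : rel V) : Prop :=
  symmetric e /\ irreflexive e.

Definition HK_nbhd (R : realFieldType) (V : finType) (e : rel V) (eps : R)
  (x : V -> R) (v : V) : {set V} :=
  [set u | e u v && (`|x u - x v| <= eps)] :|: [set v].

Definition HK_move (R : realFieldType) (V : finType) (e : rel V) (eps : R)
  (x : V -> R) (v : V) : R :=
  (#|HK_nbhd e eps x v|%:R)^-1 * \sum_(u in HK_nbhd e eps x v) (x u - x v).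

Definition HK_infl_edge (R : realFieldType) (V : finType) (e : rel V) (eps : R)
  (x : V -> R) (u w : V) : bool :=
  e u w && (`|x u - x w| <= eps).

From HB Require Import structures.
From mathcomp Require Import all_boot all_order all_algebra.
From mathcomp Require Import lra.
Import Order.TTheory GRing.Theory Num.Theory.
Local Open Scope ring_scope.

(* Up to sign, |N_v| m_v is the total pull sum_u (x_u - x_v) of the influencing
   neighbours on v.  Give v the sign +1 if x_v <= c and -1 otherwise; then
   sum_v |N_v| |m_v| dominates the signed sum of all pulls.  Grouping the two
   pulls along each influence edge {u,w}, they cancel when u and w lie on the
   same side of c and add up to 2 |x_u - x_w| when the edge crosses c. *)

Lemma sum_swap_pair {T : finType} {M : nmodType} (F : T * T -> M) :
  \sum_p F (p.2, p.1) = \sum_p F p.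
Proof.
have swap_inj : injective (fun p : T * T => (p.2, p.1)).
  by move=> [a b] [a' b'] [-> ->].
by rewrite [RHS](reindex_inj swap_inj).
Qed.

Section HegselmannKrause.

Context {R : realFieldType} {V : finType} (e : rel V) (eps : R) (x : V -> R).

Lemma HK_nbhd_card_gt0 v : (0 < #|HK_nbhd e eps x v|)%N.
Proof. by apply/card_gt0P; exists v; rewrite !inE eqxx orbT. Qed.

Lemma HK_move_mulr_card v :
  #|HK_nbhd e eps x v|%:R * HK_move e eps x v
  = \sum_u (if HK_infl_edge e eps x u v then x u - x v else 0).
Proof.
rewrite /HK_move mulrA mulfV ?pnatr_eq0 -?lt0n ?HK_nbhd_card_gt0 // mul1r.
rewrite big_mkcond; apply: eq_bigr => u _; rewrite !inE.
by case: (eqVneq u v) => [->|_]; rewrite ?subrr ?if_same ?orbF.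
Qed.

Hypothesis e_sym : symmetric e.

Lemma HK_infl_edge_sym u w :
  HK_infl_edge e eps x u w = HK_infl_edge e eps x w u.
Proof. by rewrite /HK_infl_edge e_sym distrC. Qed.

Variable c : R.

Definition side_sign v : R := if x v <= c then 1 else -1.

Definition cut_edge (p : V * V) : bool :=
  [&& x p.1 <= c, ~~ (x p.2 <= c) & HK_infl_edge e eps x p.1 p.2].

Definition signed_pull (p : V * V) : R :=
  if HK_infl_edge e eps x p.2 p.1 then side_sign p.1 * (x p.2 - x p.1) else 0.

Lemma side_sign_mulr_le_norm v a : side_sign v * a <= `|a|.
Proof.
rewrite /side_sign; case: ifP => _; first by rewrite mul1r ler_norm.
by rewrite mulN1r -normrN ler_norm.
Qed.

Lemma signed_pull_add_swap p :
  signed_pull p + signed_pull (p.2, p.1)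
  = 2 * ((if cut_edge p then `|x p.1 - x p.2| else 0)
       + (if cut_edge (p.2, p.1) then `|x p.1 - x p.2| else 0)).
Proof.
case: p => u w; rewrite /signed_pull /cut_edge /= (HK_infl_edge_sym w u).
case: (HK_infl_edge _ _ _ u w); last by rewrite !andbF addr0 mulr0.
rewrite !andbT /side_sign.
case: (lerP (x u) c) => hu; case: (lerP (x w) c) => hw /=.
- lra.
- rewrite distrC ger0_norm; lra.
- rewrite ger0_norm; lra.
- lra.
Qed.

Lemma sum_signed_pull :
  \sum_p signed_pull p = 2 * \sum_(p | cut_edge p) `|x p.1 - x p.2|.
Proof.
have cut_swap : \sum_(p | cut_edge (p.2, p.1)) `|x p.1 - x p.2|
              = \sum_(p | cut_edge p) `|x p.1 - x p.2|.
  rewrite big_mkcond [RHS]big_mkcond.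
  rewrite -(sum_swap_pair (fun p => if cut_edge p then `|x p.1 - x p.2| else 0)).
  by apply: eq_bigr => p _; rewrite distrC.
have twice : \sum_p signed_pull p + \sum_p signed_pull p
           = 2 * (\sum_(p | cut_edge p) `|x p.1 - x p.2|
                  + \sum_(p | cut_edge p) `|x p.1 - x p.2|).
  rewrite -{2}(sum_swap_pair signed_pull) -big_split /=.
  rewrite (eq_bigr _ (fun p _ => signed_pull_add_swap p)) -mulr_sumr big_split.
  by rewrite -!big_mkcond cut_swap.
lra.
Qed.

Lemma sum_side_sign_mulr_moves :
  \sum_v side_sign v * (#|HK_nbhd e eps x v|%:R * HK_move e eps x v)
  = \sum_p signed_pull p.
Proof.
rewrite -(pair_bigA _ (fun v u => signed_pull (v, u))).
apply: eq_bigr => v _; rewrite HK_move_mulr_card mulr_sumr.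
by apply: eq_bigr => u _; rewrite /signed_pull /=; case: ifP; rewrite ?mulr0.
Qed.

End HegselmannKrause.

Theorem lemma2 (R : realFieldType) (V : finType) (e : rel V) (eps : R)
  (x : V -> R) (c : R) :
  simple_graph e -> 0 < eps ->
  \sum_(v : V) #|HK_nbhd e eps x v|%:R * `|HK_move e eps x v|
  >= 2 * \sum_(p : V * V | [&& x p.1 <= c, ~~ (x p.2 <= c)
                              & HK_infl_edge e eps x p.1 p.2])
         `|x p.1 - x p.2|.
Proof.
move=> [e_sym _] _.
rewrite -(sum_signed_pull e eps x e_sym c) -sum_side_sign_mulr_moves.
apply: ler_sum => v _.
by apply: le_trans (side_sign_mulr_le_norm _ _ _ _) _; rewrite normrM normr_nat.
Qed.
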